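(* Let $y_1,y_2,y_3\in Y(\mathfrak{o})$, $d\in D(3)$, $u\in U(3)$, $C\in\Gamma_\infty(3)$, and let $A=\varphi_2(y_1^{-1})\varphi_1(y_2^{-1})\varphi_2(y_3^{-1})\,d\,u\,C$. (1) If $A\in\Delta_1$ then $y_2\neq I_2$. (2) If $A\in\Delta_{1,1}$ then $y_3\neq I_2$.
   Context: Let $\omega=e^{2\pi i/3}$, $\mathfrak{o}=\mathbb{Z}[\omega]$, $\mathfrak{o}^\times$ its unit group. Fix representatives of nonzero elements of $\mathfrak{o}$ modulo units (''$c\in(\mathfrak{o}-\{0\})/\mathfrak{o}^\times$'') and, for each nonzero $c$, representatives of $\mathfrak{o}/c\mathfrak{o}$ (''$a\in\mathfrak{o}/c\mathfrak{o}$''). $Y(\mathfrak{o})=\{\begin{pmatrix}a&b\\c&d\end{pmatrix}\in SL_2(\mathfrak{o}) : c\in(\mathfrak{o}-\{0\})/\mathfrak{o}^\times,\ a\in\mathfrak{o}/c\mathfrak{o}\}\cup\{I_2\}$. $\Gamma(3)=\{A\in SL_3(\mathfrak{o}):A\equiv I_3\pmod{3\mathfrak{o}}\}$ (entrywise), $\Gamma_\infty(3)$ its subgroup of upper triangular unipotent matrices. $D(3)$: diagonal $\mathrm{diag}(i,j,k)$, $i,j,k\in\mathfrak{o}$, $ijk=1$. $U(3)$: matrices $\begin{pmatrix}1&\alpha&\beta\\&1&\gamma\\&&1\end{pmatrix}$ with $\alpha,\beta,\gamma\in\{0,1,2\}+\{0,1,2\}\omega$. For $y=\begin{pmatrix}a&b\\c&d\end{pmatrix}$,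 $\varphi_1(y)=\begin{pmatrix}a&b&0\\c&d&0\\0&0&1\end{pmatrix}$, $\varphi_2(y)=\begin{pmatrix}1&0&0\\0&a&b\\0&c&d\end{pmatrix}$. For $A=(a_{ij})\in SL_3(\mathfrak{o})$: $\Delta_1=\{A: a_{21}\neq0 \text{ or } a_{31}\neq0\}$ and $\Delta_{1,1}=\{A : a_{21}a_{32}-a_{22}a_{31}\neq0\}$. *)

(* o = Z[omega] is modelled as a subring of algC. *)
From HB Require Import structures.
From mathcomp Require Import all_boot all_order all_algebra all_field.
Set Implicit Arguments. Unset Strict Implicit. Unset Printing Implicit Defensive.
Import Order.TTheory GRing.Theory Num.Theory.
Local Open Scope ring_scope.

(* omega = e^{2 pi i/3} = (-1 + i sqrt 3)/2 *)
Definition omega : algC := (-1 + 'i * sqrtC 3) / 2.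

Definition inO (x : algC) : Prop :=
  exists a b : int, x = a%:~R + b%:~R * omega.

Definition unitO (u : algC) : Prop := inO u /\ u != 0 /\ inO u^-1.

Definition congO (c a b : algC) : Prop := exists k, inO k /\ a - b = c * k.

(* RepC : the fixed representatives of (o - {0}) / o^x ;
   RepA c : the fixed representatives of o / c o (for each such c). *)
Definition rep_system (RepC : algC -> Prop) (RepA : algC -> algC -> Prop) : Prop :=
  (forall c, RepC c -> inO c /\ c != 0) /\
  (forall x, inO x -> x != 0 ->
     exists! c, RepC c /\ exists u, unitO u /\ x = u * c) /\
  (forall c, RepC c ->
     (forall a, RepA c a -> inO a) /\
     (forall x, inO x -> exists! a, RepA c a /\ congO c x a)).

Definition matO n (M : 'M[algC]_n) : Prop := forall i j, inO (M i j).
Definition SLO n (M : 'M[algC]_n) : Prop := matO M /\ \det M = 1.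

Definition j0 : 'I_2 := inord 0.
Definition j1 : 'I_2 := inord 1.
Definition i0 : 'I_3 := inord 0.
Definition i1 : 'I_3 := inord 1.
Definition i2 : 'I_3 := inord 2.

Definition inY (RepC : algC -> Prop) (RepA : algC -> algC -> Prop)
    (y : 'M[algC]_2) : Prop :=
  (SLO y /\ RepC (y j1 j0) /\ RepA (y j1 j0) (y j0 j0)) \/ y = 1%:M.

Definition inGamma3 (A : 'M[algC]_3) : Prop :=
  SLO A /\ forall i j : 'I_3, congO 3 (A i j) ((i == j)%:R).
Definition inGammaInf3 (A : 'M[algC]_3) : Prop :=
  inGamma3 A /\ (forall i j : 'I_3, (j < i)%N -> A i j = 0)
             /\ (forall i, A i i = 1).

Definition inD3 (d : 'M[algC]_3) : Prop :=
  exists x y z, [/\ inO x, inO y, inO z, x * y * z = 1 &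
     d = \matrix_(i < 3, j < 3)
           (if i == j then (if i == i0 then x else if i == i1 then y else z)
            else 0)].

Definition inS3 (x : algC) : Prop :=
  exists a b : 'I_3, x = (a : nat)%:R + (b : nat)%:R * omega.

Definition inU3 (u : 'M[algC]_3) : Prop :=
  exists al be ga, [/\ inS3 al, inS3 be, inS3 ga &
    u = \matrix_(i < 3, j < 3)
          (if i == j then 1
           else if (i == i0) && (j == i1) then al
           else if (i == i0) && (j == i2) then be
           else if (i == i1) && (j == i2) then ga else 0)].

Definition phi1 (y : 'M[algC]_2) : 'M[algC]_3 :=
  \matrix_(i < 3, j < 3)
    (if ((i : nat) < 2)%N && ((j : nat) < 2)%N then y (inord i) (inord j)
     else (i == j)%:R).

Definition phi2 (y : 'M[algC]_2) : 'M[algC]_3 :=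
  \matrix_(i < 3, j < 3)
    (if (0 < (i : nat))%N && (0 < (j : nat))%N then y (inord i.-1) (inord j.-1)
     else (i == j)%:R).

(* Delta_1 and Delta_{1,1} (a_{kl} = A (k-1) (l-1)) *)
Definition inDelta1 (A : 'M[algC]_3) : Prop := A i1 i0 != 0 \/ A i2 i0 != 0.
Definition inDelta11 (A : 'M[algC]_3) : Prop :=
  A i1 i0 * A i2 i1 - A i1 i1 * A i2 i0 != 0.

From mathcomp Require Import all_boot all_order all_algebra all_field ring.
Import GRing.Theory.
Set Implicit Arguments.
Unset Strict Implicit.
Unset Printing Implicit Defensive.
Local Open Scope ring_scope.

(* Put T = d u C, an upper triangular matrix. A block upper triangular
   matrix of shape (k, 3 - k) is one preserving the span of e1, ..., ek:
   every phi2 x has shape (1, 2), every phi1 y has shape (2, 1), T has both,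
   and each shape is closed under products. If y2 = 1, all factors of A have
   shape (1, 2), hence so does A, i.e. a21 = a31 = 0. If y3 = 1, then
   A = phi2 x P with P of shape (2, 1); in the first two columns, rows 2 and 3
   of A are both multiples of row 2 of P, so a21 a32 - a22 a31 = 0. *)

Section BlockUpperTriangular.
Variables (R : pzSemiRingType) (n : nat).

Definition upper_mx (M : 'M[R]_n) : Prop :=
  forall i j : 'I_n, (j < i)%N -> M i j = 0.

Definition block_upper_mx (k : nat) (M : 'M[R]_n) : Prop :=
  forall i j : 'I_n, (j < k <= i)%N -> M i j = 0.

Lemma upper_block_upper_mx k M : upper_mx M -> block_upper_mx k M.
Proof. by move=> uM i j /andP[jk ki]; apply/uM/(leq_trans jk ki). Qed.

Lemma block_upper_mulmx k M N :
  block_upper_mx k M -> block_upper_mx k N -> block_upper_mx k (M *m N).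
Proof.
move=> bM bN i j /andP[jk ki]; rewrite mxE big1 // => l _.
have [lk | kl] := ltnP l k; first by rewrite bM ?mul0r // lk ki.
by rewrite bN ?mulr0 // jk kl.
Qed.

End BlockUpperTriangular.

Lemma mulmx3E (R : pzSemiRingType) (M N : 'M[R]_3) i j :
  (M *m N) i j = M i i0 * N i0 j + M i i1 * N i1 j + M i i2 * N i2 j.
Proof.
rewrite mxE !big_ord_recl big_ord0 addr0 addrA.
by congr (M i _ * N _ j + M i _ * N _ j + M i _ * N _ j); apply: val_inj;
  rewrite /= inordK.
Qed.

Lemma upper_mx3 (R : pzSemiRingType) (M : 'M[R]_3) :
  M i1 i0 = 0 -> M i2 i0 = 0 -> M i2 i1 = 0 -> upper_mx M.
Proof.
move=> M10 M20 M21 i j ji; rewrite -(inord_val i) -(inord_val j).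
by case: i j ji => [[|[|[|?]]] ?] [[|[|[|?]]] ?].
Qed.

Lemma phi1_block_upper_mx (y : 'M[algC]_2) : block_upper_mx 2 (phi1 y).
Proof.
move=> i j /andP[j_lt2 i_ge2]; rewrite /phi1 mxE ltnNge i_ge2 /=.
by rewrite -val_eqE gtn_eqF // (leq_trans j_lt2 i_ge2).
Qed.

Lemma phi2_block_upper_mx (y : 'M[algC]_2) : block_upper_mx 1 (phi2 y).
Proof.
move=> i j /andP[]; rewrite ltnS => j0 i_pos.
by rewrite /phi2 mxE (leq_gtF j0) andbF -val_eqE gtn_eqF // (leq_ltn_trans j0 i_pos).
Qed.

Lemma phi1_1 : phi1 1%:M = 1%:M.
Proof.
apply/matrixP => i j; rewrite /phi1 !mxE; case: ifP => // /andP[i_lt2 j_lt2].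
by rewrite -val_eqE /= !inordK.
Qed.

Lemma phi2_1 : phi2 1%:M = 1%:M.
Proof.
apply/matrixP => i j; rewrite /phi2 !mxE; case: ifP => // /andP[].
by case: i j => [[|[|[|?]]] ?] [[|[|[|?]]] ?] //= _ _; rewrite -val_eqE /= !inordK.
Qed.

Lemma minor_mulmx_block_upper (R : comPzRingType) (M P : 'M[R]_3) :
  block_upper_mx 1 M -> block_upper_mx 2 P ->
  let A := M *m P in A i1 i0 * A i2 i1 - A i1 i1 * A i2 i0 = 0.
Proof.
move=> bM bP A; rewrite /A !mulmx3E.
have [M10 M20] : M i1 i0 = 0 /\ M i2 i0 = 0 by split; apply: bM; rewrite !inordK.
have [P20 P21] : P i2 i0 = 0 /\ P i2 i1 = 0 by split; apply: bP; rewrite !inordK.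
rewrite M10 M20 P20 P21; ring.
Qed.

Lemma block_upper_mx1_notin_Delta1 (A : 'M[algC]_3) :
  block_upper_mx 1 A -> ~ inDelta1 A.
Proof. by move=> bA [] /eqP; apply; apply: bA; rewrite !inordK. Qed.

Lemma upper_mx_inD3 d : inD3 d -> upper_mx d.
Proof.
by case=> [x [y [z [_ _ _ _ ->]]]]; apply: upper_mx3; rewrite !mxE -!val_eqE /= !inordK.
Qed.

Lemma upper_mx_inU3 u : inU3 u -> upper_mx u.
Proof.
by case=> [a [b [c [_ _ _ ->]]]]; apply: upper_mx3; rewrite !mxE -!val_eqE /= !inordK.
Qed.

Lemma upper_mx_inGammaInf3 C : inGammaInf3 C -> upper_mx C.
Proof. by case=> _ []. Qed.

Theorem lemma2p12 (RepC : algC -> Prop) (RepA : algC -> algC -> Prop)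
  (y1 y2 y3 : 'M[algC]_2) (d u C : 'M[algC]_3) :
  rep_system RepC RepA ->
  inY RepC RepA y1 -> inY RepC RepA y2 -> inY RepC RepA y3 ->
  inD3 d -> inU3 u -> inGammaInf3 C ->
  let A := phi2 (invmx y1) *m phi1 (invmx y2) *m phi2 (invmx y3) *m d *m u *m C in
  (inDelta1 A -> y2 <> 1%:M) /\ (inDelta11 A -> y3 <> 1%:M).
Proof.
move=> _ _ _ _ /upper_mx_inD3 ud /upper_mx_inU3 uu /upper_mx_inGammaInf3 uC A.
set T := d *m u *m C.
have bT k : block_upper_mx k T.
  by do ![apply: block_upper_mulmx | apply: upper_block_upper_mx].
have -> : A = phi2 (invmx y1) *m phi1 (invmx y2) *m phi2 (invmx y3) *m T.
  by rewrite /A /T !mulmxA.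
split=> [Delta1 y2_1 | Delta11 y3_1].
- move: Delta1; rewrite y2_1 invmx1 phi1_1 mulmx1.
  apply: block_upper_mx1_notin_Delta1.
  apply: block_upper_mulmx (bT 1).
  by apply: block_upper_mulmx; apply: phi2_block_upper_mx.
- move: Delta11; rewrite /inDelta11 y3_1 invmx1 phi2_1 mulmx1 -mulmxA.
  rewrite minor_mulmx_block_upper ?eqxx //; first exact: phi2_block_upper_mx.
  by apply: block_upper_mulmx; [apply: phi1_block_upper_mx | apply: bT].
Qed.
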